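(* Let $\psi,\varphi$ be metric formulas and $m,n\in\mathbb{N}$ with $0<m<n-1$. Then, with respect to strict timed traces, $$\psi\,\mathsf{U}_{[m,n)}\,\varphi\equiv\psi\wedge\Big(\bigvee_{i=1}^{m}\circ_{[i,i]}\big(\psi\,\mathsf{U}_{[m-i,n-i)}\,\varphi\big)\vee\bigvee_{i=m+1}^{n-1}\circ_{[i,i]}\big(\psi\,\mathsf{U}_{[0,n-1-i]}\,\varphi\big)\Big),$$ $$\psi\,\mathsf{R}_{[m,n)}\,\varphi\equiv\psi\vee\Big(\bigwedge_{i=1}^{m}\widehat{\circ}_{[i,i]}\big(\psi\,\mathsf{R}_{[m-i,n-i)}\,\varphi\big)\wedge\bigwedge_{i=m+1}^{n-1}\widehat{\circ}_{[i,i]}\big(\psi\,\mathsf{R}_{[0,n-1-i]}\,\varphi\big)\Big),$$ and the same holds for the dual past operators, i.e. the equivalences obtained by replacing $\mathsf{U},\mathsf{R},\circ,\widehat{\circ}$ by $\mathsf{S},\mathsf{T},\bullet,\widehat{\bullet}$ respectively.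
   Context: Write $[m,n)=\{i\in\mathbb{N}\mid m\le i<n\}$, $[m,n]=\{i\in\mathbb{N}\mid m\le i\le n\}$, $(m,n]=\{i\in\mathbb{N}\mid m<i\le n\}$. Metric formulas over a set of atoms $\mathcal{A}$: $\varphi::=p\mid\bot\mid\varphi_1\wedge\varphi_2\mid\varphi_1\vee\varphi_2\mid\varphi_1\to\varphi_2\mid\bullet_I\varphi\mid\varphi_1\mathsf{S}_I\varphi_2\mid\varphi_1\mathsf{T}_I\varphi_2\mid\circ_I\varphi\mid\varphi_1\mathsf{U}_I\varphi_2\mid\varphi_1\mathsf{R}_I\varphi_2$, $p\in\mathcal{A}$, $I=[m,n)$, $m\in\mathbb{N}$, $n\in\mathbb{N}\cup\{\omega\}$; a subscript $[m,n]$ with $n\in\mathbb{N}$ abbreviates $[m,n+1)$. Derived: $\neg\varphi:=\varphi\to\bot$, $\top:=\neg\bot$, $\widehat{\bullet}_I\varphi:=\bullet_I\varphi\vee\neg\bullet_I\top$, $\widehat{\circ}_I\varphi:=\circ_I\varphi\vee\neg\circ_I\top$. A timed HT-trace of length $\lambda\in\mathbb{N}\cup\{\omega\}$ is $\mathbf{M}=(\langle\mathbf{H},\mathbf{T}\rangle,\tau)$ with $H_i\subseteq T_i\subseteq\mathcal{A}$ for $i\in[0,\lambda)$, $\tau:[0,\lambda)\to\mathbb{N}$, $\tau(0)=0$, $\tau(i)\le\tau(i+1)$; it is strict if $\tau(i)<\tau(i+1)$ whenever $i+1<\lambda$. Satisfaction at $k\in[0,\lambda)$: $\bot$ never; $p$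 iff $p\in H_k$; $\wedge,\vee$ usual; $\varphi\to\psi$ iff for both $\mathbf{M}'=\mathbf{M}$ and $\mathbf{M}'=(\langle\mathbf{T},\mathbf{T}\rangle,\tau)$, $\mathbf{M}',k\not\models\varphi$ or $\mathbf{M}',k\models\psi$; $\bullet_I\varphi$ iff $k>0$, $\mathbf{M},k-1\models\varphi$, $\tau(k)-\tau(k-1)\in I$; $\varphi\mathsf{S}_I\psi$ iff for some $j\in[0,k]$ with $\tau(k)-\tau(j)\in I$, $\mathbf{M},j\models\psi$ and $\mathbf{M},i\models\varphi$ for all $i\in(j,k]$; $\varphi\mathsf{T}_I\psi$ iff for all $j\in[0,k]$ with $\tau(k)-\tau(j)\in I$, $\mathbf{M},j\models\psi$ or $\mathbf{M},i\models\varphi$ for some $i\in(j,k]$; $\circ_I\varphi$ iff $k+1<\lambda$, $\mathbf{M},k+1\models\varphi$, $\tau(k+1)-\tau(k)\in I$; $\varphi\mathsf{U}_I\psi$ iff for some $j\in[k,\lambda)$ with $\tau(j)-\tau(k)\in I$, $\mathbf{M},j\models\psi$ and $\mathbf{M},i\models\varphi$ for all $i\in[k,j)$; $\varphi\mathsf{R}_I\psi$ iff for all $j\in[k,\lambda)$ with $\tau(j)-\tau(k)\in I$, $\mathbf{M},j\models\psi$ or $\mathbf{M},i\models\varphi$ for some $i\in[k,j)$. Here $\alpha\equiv\beta$ (w.r.t. strict traces) means: for every strict timed HT-trace $\mathbf{M}$ of any length $\lambda$ and every $k\in[0,\lambda)$, $\mathbf{M},k\models\alpha$ iff $\mathbf{M},k\models\beta$.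 *)

From Stdlib Require Import Arith List.
Import ListNotations.

Set Implicit Arguments.

(* Intervals [lo, hi) with lo : nat and hi : nat or omega (None = omega). *)
Record interval := mkI { lo : nat; hi : option nat }.

Definition closedI (a b : nat) : interval := mkI a (Some (S b)).

Definition in_int (d : nat) (I : interval) : Prop :=
  lo I <= d /\ match hi I with None => True | Some h => d < h end.

Inductive formula (A : Type) : Type :=
| Atom : A -> formula A
| Bot : formula A
| And : formula A -> formula A -> formula A
| Or : formula A -> formula A -> formula A
| Imp : formula A -> formula A -> formula A
| Prev : interval -> formula A -> formula A
| Since : interval -> formula A -> formula A -> formula A
| Trigger : interval -> formula A -> formula A -> formula A
| Next : interval -> formula A -> formula A
| Until : interval -> formula A -> formula A -> formula A
| Release : interval -> formula A -> formula A -> formula A.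

Arguments Bot {A}.

Definition Neg {A} (f : formula A) : formula A := Imp f Bot.
Definition Top {A} : formula A := Neg Bot.
Definition WPrev {A} (I : interval) (f : formula A) : formula A :=
  Or (Prev I f) (Neg (Prev I Top)).
Definition WNext {A} (I : interval) (f : formula A) : formula A :=
  Or (Next I f) (Neg (Next I Top)).

Fixpoint bigOr {A} (l : list (formula A)) : formula A :=
  match l with
  | [] => Bot
  | [f] => f
  | f :: l' => Or f (bigOr l')
  end.
Fixpoint bigAnd {A} (l : list (formula A)) : formula A :=
  match l with
  | [] => Top
  | [f] => f
  | f :: l' => And f (bigAnd l')
  end.

(* i ranges over a..b (inclusive) *)
Definition range (a b : nat) : list nat := List.seq a (S b - a).

(* Timed HT-trace: length lam (None = omega), H, T, tau. *)
Record trace (A : Type) := mkTrace {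
  lam : option nat;
  Hs : nat -> A -> Prop;
  Ts : nat -> A -> Prop;
  tau : nat -> nat }.

Definition lt_len {A} (M : trace A) (k : nat) : Prop :=
  match lam M with None => True | Some l => k < l end.

Definition wf_trace {A} (M : trace A) : Prop :=
  (forall i, lt_len M i -> forall p, Hs M i p -> Ts M i p) /\
  tau M 0 = 0 /\
  (forall i, lt_len M (S i) -> tau M i <= tau M (S i)).

Definition strict_trace {A} (M : trace A) : Prop :=
  forall i, lt_len M (S i) -> tau M i < tau M (S i).

Definition totT {A} (M : trace A) : trace A :=
  mkTrace (lam M) (Ts M) (Ts M) (tau M).

Fixpoint sat {A} (M : trace A) (k : nat) (f : formula A) : Prop :=
  match f with
  | Atom p => Hs M k p
  | Bot => False
  | And f1 f2 => sat M k f1 /\ sat M k f2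
  | Or f1 f2 => sat M k f1 \/ sat M k f2
  | Imp f1 f2 => (~ sat M k f1 \/ sat M k f2) /\
                 (~ sat (totT M) k f1 \/ sat (totT M) k f2)
  | Prev J g => 0 < k /\ sat M (k - 1) g /\ in_int (tau M k - tau M (k - 1)) J
  | Since J g h => exists j, j <= k /\ in_int (tau M k - tau M j) J /\
      sat M j h /\ (forall i, j < i <= k -> sat M i g)
  | Trigger J g h => forall j, j <= k -> in_int (tau M k - tau M j) J ->
      sat M j h \/ (exists i, j < i <= k /\ sat M i g)
  | Next J g => lt_len M (S k) /\ sat M (S k) g /\
      in_int (tau M (S k) - tau M k) J
  | Until J g h => exists j, k <= j /\ lt_len M j /\
      in_int (tau M j - tau M k) J /\
      sat M j h /\ (forall i, k <= i < j -> sat M i g)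
  | Release J g h => forall j, k <= j -> lt_len M j ->
      in_int (tau M j - tau M k) J ->
      sat M j h \/ (exists i, k <= i < j /\ sat M i g)
  end.

Definition equiv_strict {A} (a b : formula A) : Prop :=
  forall M : trace A, wf_trace M -> strict_trace M ->
  forall k, lt_len M k -> (sat M k a <-> sat M k b).

From Stdlib Require Import PeanoNat List Lia Classical.

(* With [0 < m], a witness of [psi U_[m,n) phi] at [k] lies strictly after [k],
   so [psi] holds at [k] and the same until holds at [k+1] once its interval is
   shifted down by the time step [d = tau (k+1) - tau k].  On strict traces
   [1 <= d], and [d < n] as soon as the shifted interval is nonempty, so exactly
   the disjunct [circ_[d,d]] of the expansion applies; for [d > m] the shifted
   interval [[m-d, n-d)] is the paper's [[0, n-1-d]].  Release, since and
   trigger are handled in the same way. *)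

(* Truncated subtraction is intended: [shiftI d I] is [{x | x + d \in I}]. *)
Definition shiftI (d : nat) (I : interval) : interval :=
  mkI (lo I - d) (option_map (fun h => h - d) (hi I)).

Lemma in_int_add_shiftI x d I : in_int (x + d) I <-> in_int x (shiftI d I).
Proof. destruct I as [l [h|]]; unfold in_int, shiftI; simpl; intuition lia. Qed.

Lemma in_int_sub_shiftI_l a b c I : a <= b <= c ->
  in_int (c - a) I <-> in_int (c - b) (shiftI (b - a) I).
Proof.
  intros. replace (c - a) with (c - b + (b - a)) by lia. apply in_int_add_shiftI.
Qed.

Lemma in_int_sub_shiftI_r a b c I : a <= b <= c ->
  in_int (c - a) I <-> in_int (b - a) (shiftI (c - b) I).
Proof.
  intros. replace (c - a) with (b - a + (c - b)) by lia. apply in_int_add_shiftI.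
Qed.

Lemma in_int_shiftI_lt_hi x d m n : in_int x (shiftI d (mkI m (Some n))) -> d < n.
Proof. unfold in_int; simpl; lia. Qed.

Lemma in_int_lo_pos d I : 0 < lo I -> in_int d I -> 0 < d.
Proof. unfold in_int; lia. Qed.

Lemma in_int_closedI_point d i : in_int d (closedI i i) <-> d = i.
Proof. unfold in_int; simpl; lia. Qed.

Lemma closedI_shiftI m n i : m <= i < n ->
  closedI 0 (n - 1 - i) = shiftI i (mkI m (Some n)).
Proof. intros. unfold closedI, shiftI; simpl; f_equal; [|f_equal]; lia. Qed.

Lemma sat_Top {A} (M : trace A) k : sat M k Top.
Proof. simpl; tauto. Qed.

Lemma sat_bigOr {A} (M : trace A) k l :
  sat M k (bigOr l) <-> exists f, In f l /\ sat M k f.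
Proof.
  induction l as [|f [|g l] IH].
  - simpl; split; [tauto | intros (? & [] & _)].
  - simpl; split; [eauto | intros (? & [<- | []] & ?); auto].
  - change (sat M k f \/ sat M k (bigOr (g :: l)) <->
            exists f', In f' (f :: g :: l) /\ sat M k f').
    rewrite IH; simpl; split.
    + intros [? | (f' & ? & ?)]; eauto.
    + intros (f' & [<- | ?] & ?); eauto.
Qed.

Lemma sat_bigAnd {A} (M : trace A) k l :
  sat M k (bigAnd l) <-> forall f, In f l -> sat M k f.
Proof.
  induction l as [|f [|g l] IH].
  - split; [intros _ _ [] | intros _; apply sat_Top].
  - simpl; split; [intros ? ? [<- | []]; auto | auto].
  - change (sat M k f /\ sat M k (bigAnd (g :: l)) <->
            forall f', In f' (f :: g :: l) -> sat M k f').
    rewrite IH; simpl; split.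
    + intros [? ?] f' [<- | ?]; auto.
    + auto.
Qed.

Lemma sat_bigOr_map_range {A} (M : trace A) k (g : nat -> formula A) a b :
  sat M k (bigOr (map g (range a b))) <-> exists i, a <= i <= b /\ sat M k (g i).
Proof.
  rewrite sat_bigOr; unfold range; split.
  - intros (f & Hf & ?). apply in_map_iff in Hf as (i & <- & Hi).
    apply in_seq in Hi. exists i; split; [lia | auto].
  - intros (i & ? & ?). exists (g i); split; auto.
    apply in_map, in_seq; lia.
Qed.

Lemma sat_bigAnd_map_range {A} (M : trace A) k (g : nat -> formula A) a b :
  sat M k (bigAnd (map g (range a b))) <-> forall i, a <= i <= b -> sat M k (g i).
Proof.
  rewrite sat_bigAnd; unfold range; split.
  - intros H i ?. apply H, in_map, in_seq; lia.
  - intros H f Hf. apply in_map_iff in Hf as (i & <- & Hi).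
    apply in_seq in Hi. apply H; lia.
Qed.

Lemma sat_Next {A} (M : trace A) k J f :
  sat M k (Next J f) <->
  lt_len M (S k) /\ sat M (S k) f /\ in_int (tau M (S k) - tau M k) J.
Proof. reflexivity. Qed.

Lemma sat_Prev {A} (M : trace A) k J f :
  sat M k (Prev J f) <->
  0 < k /\ sat M (k - 1) f /\ in_int (tau M k - tau M (k - 1)) J.
Proof. reflexivity. Qed.

Lemma sat_WNext {A} (M : trace A) k J f :
  sat M k (WNext J f) <->
  (lt_len M (S k) -> in_int (tau M (S k) - tau M k) J -> sat M (S k) f).
Proof.
  pose proof (sat_Top M (S k)); pose proof (sat_Top (totT M) (S k)).
  unfold WNext, Neg; simpl; tauto.
Qed.

Lemma sat_WPrev {A} (M : trace A) k J f :
  sat M k (WPrev J f) <->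
  (0 < k -> in_int (tau M k - tau M (k - 1)) J -> sat M (k - 1) f).
Proof.
  pose proof (sat_Top M (k - 1)); pose proof (sat_Top (totT M) (k - 1)).
  unfold WPrev, Neg; simpl; tauto.
Qed.

Section Trace.

Variables (A : Type) (M : trace A).
Hypothesis tau_step_le : forall i, lt_len M (S i) -> tau M i <= tau M (S i).

Lemma lt_len_le i j : i <= j -> lt_len M j -> lt_len M i.
Proof. unfold lt_len; destruct (lam M); lia. Qed.

Lemma tau_le i j : i <= j -> lt_len M j -> tau M i <= tau M j.
Proof.
  induction 1 as [|j ? IH]; intros Hj; [lia|].
  specialize (tau_step_le j Hj). specialize (IH (lt_len_le j (S j) ltac:(lia) Hj)). lia.
Qed.

Lemma tau_le_succ k j : S k <= j -> lt_len M j ->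
  tau M k <= tau M (S k) <= tau M j.
Proof. intros. split; apply tau_le; auto; apply (lt_len_le _ j); auto. Qed.

Lemma tau_le_pred j k : j <= k - 1 -> lt_len M k ->
  tau M j <= tau M (k - 1) <= tau M k.
Proof.
  intros. split; apply tau_le; auto; [|lia]. apply (lt_len_le _ k); auto; lia.
Qed.

Lemma sat_Until_step I psi phi k : 0 < lo I ->
  sat M k (Until I psi phi) <->
  sat M k psi /\ lt_len M (S k) /\
  sat M (S k) (Until (shiftI (tau M (S k) - tau M k) I) psi phi).
Proof.
  intros Hlo; simpl; split.
  - intros (j & Hkj & Hj & HI & Hphi & Hpsi).
    pose proof (in_int_lo_pos _ _ Hlo HI).
    assert (Hafter : k < j) by (destruct (Nat.eq_dec k j) as [<- | ]; lia).
    assert (HSk : lt_len M (S k)) by (apply (lt_len_le _ j); auto).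
    split; [apply Hpsi; lia|]. split; [exact HSk|].
    exists j; split; [lia|]; split; [exact Hj|]; split; [|split; [exact Hphi|]].
    + apply in_int_sub_shiftI_l; auto using tau_le_succ.
    + intros; apply Hpsi; lia.
  - intros (Hpsik & HSk & j & Hkj & Hj & HI & Hphi & Hpsi).
    exists j; split; [lia|]; split; [exact Hj|]; split; [|split; [exact Hphi|]].
    + apply in_int_sub_shiftI_l with (b := tau M (S k)); auto using tau_le_succ.
    + intros i ?. destruct (Nat.eq_dec i k) as [-> | ]; auto. apply Hpsi; lia.
Qed.

Lemma sat_Release_step I psi phi k : 0 < lo I ->
  sat M k (Release I psi phi) <->
  sat M k psi \/
  (lt_len M (S k) -> sat M (S k) (Release (shiftI (tau M (S k) - tau M k) I) psi phi)).
Proof.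
  intros Hlo; simpl; split.
  - intros HR. destruct (classic (sat M k psi)) as [| Hnpsi]; [now left | right].
    intros HSk j Hkj Hj HI.
    destruct (HR j ltac:(lia) Hj) as [| (i & Hi & ?)]; auto.
    + apply in_int_sub_shiftI_l with (b := tau M (S k)); auto using tau_le_succ.
    + right. exists i; split; auto.
      destruct (Nat.eq_dec i k) as [-> | ]; [contradiction | lia].
  - intros HR j Hkj Hj HI.
    pose proof (in_int_lo_pos _ _ Hlo HI).
    assert (Hafter : k < j) by (destruct (Nat.eq_dec k j) as [<- | ]; lia).
    destruct HR as [| HR]; [right; exists k; split; auto; lia|].
    assert (HSk : lt_len M (S k)) by (apply (lt_len_le _ j); auto).
    destruct (HR HSk j Hafter Hj) as [| (i & Hi & ?)]; auto.
    + apply in_int_sub_shiftI_l; auto using tau_le_succ.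
    + right. exists i; split; auto; lia.
Qed.

Lemma sat_Since_step I psi phi k : 0 < lo I -> lt_len M k ->
  sat M k (Since I psi phi) <->
  sat M k psi /\ 0 < k /\
  sat M (k - 1) (Since (shiftI (tau M k - tau M (k - 1)) I) psi phi).
Proof.
  intros Hlo Hk; simpl; split.
  - intros (j & Hjk & HI & Hphi & Hpsi).
    pose proof (in_int_lo_pos _ _ Hlo HI).
    assert (Hbefore : j < k) by (destruct (Nat.eq_dec j k) as [-> | ]; lia).
    split; [apply Hpsi; lia|]. split; [lia|].
    exists j; split; [lia|]; split; [|split; [exact Hphi|]].
    + apply in_int_sub_shiftI_r; [apply tau_le_pred; auto; lia | exact HI].
    + intros; apply Hpsi; lia.
  - intros (Hpsik & Hpos & j & Hjk & HI & Hphi & Hpsi).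
    exists j; split; [lia|]; split; [|split; [exact Hphi|]].
    + apply in_int_sub_shiftI_r with (b := tau M (k - 1)); auto using tau_le_pred.
    + intros i ?. destruct (Nat.eq_dec i k) as [-> | ]; auto. apply Hpsi; lia.
Qed.

Lemma sat_Trigger_step I psi phi k : 0 < lo I -> lt_len M k ->
  sat M k (Trigger I psi phi) <->
  sat M k psi \/
  (0 < k -> sat M (k - 1) (Trigger (shiftI (tau M k - tau M (k - 1)) I) psi phi)).
Proof.
  intros Hlo Hk; simpl; split.
  - intros HT. destruct (classic (sat M k psi)) as [| Hnpsi]; [now left | right].
    intros Hpos j Hjk HI.
    destruct (HT j ltac:(lia)) as [| (i & Hi & ?)]; auto.
    + apply in_int_sub_shiftI_r with (b := tau M (k - 1)); auto using tau_le_pred.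
    + right. exists i; split; auto.
      destruct (Nat.eq_dec i k) as [-> | ]; [contradiction | lia].
  - intros HT j Hjk HI.
    pose proof (in_int_lo_pos _ _ Hlo HI).
    assert (Hbefore : j < k) by (destruct (Nat.eq_dec j k) as [-> | ]; lia).
    destruct HT as [| HT]; [right; exists k; split; auto; lia|].
    destruct (HT ltac:(lia) j ltac:(lia)) as [| (i & Hi & ?)]; auto.
    + apply in_int_sub_shiftI_r; [apply tau_le_pred; auto; lia | exact HI].
    + right. exists i; split; auto; lia.
Qed.

Hypothesis tau_step_lt : forall i, lt_len M (S i) -> tau M i < tau M (S i).

Lemma tau_pred_lt k : 0 < k -> lt_len M k -> tau M (k - 1) < tau M k.
Proof. destruct k as [|k]; [lia|]. rewrite Nat.sub_succ, Nat.sub_0_r. auto. Qed.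

Lemma sat_Until_expand psi phi m n k : 0 < m ->
  sat M k (Until (mkI m (Some n)) psi phi) <->
  sat M k (And psi (Or
    (bigOr (map (fun i => Next (closedI i i)
              (Until (mkI (m - i) (Some (n - i))) psi phi)) (range 1 m)))
    (bigOr (map (fun i => Next (closedI i i)
              (Until (closedI 0 (n - 1 - i)) psi phi)) (range (m + 1) (n - 1)))))).
Proof.
  intros Hm. rewrite sat_Until_step by exact Hm.
  cbn [sat]. rewrite !sat_bigOr_map_range. cbv beta.
  setoid_rewrite sat_Next. setoid_rewrite in_int_closedI_point.
  set (d := tau M (S k) - tau M k). apply and_iff_compat_l. split.
  - intros (HSk & HU).
    assert (1 <= d) by (specialize (tau_step_lt k HSk); lia).
    assert (d < n).
    { destruct HU as (j & _ & _ & HI & _). exact (in_int_shiftI_lt_hi _ _ _ _ HI). }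
    destruct (Nat.le_gt_cases d m).
    + left. exists d. split; [lia | auto].
    + right. exists d. rewrite (closedI_shiftI m) by lia. split; [lia | auto].
  - intros [(i & Hi & HSk & HU & <-) | (i & Hi & HSk & HU & <-)].
    + auto.
    + rewrite (closedI_shiftI m) in HU by lia. auto.
Qed.

Lemma sat_Release_expand psi phi m n k : 0 < m ->
  sat M k (Release (mkI m (Some n)) psi phi) <->
  sat M k (Or psi (And
    (bigAnd (map (fun i => WNext (closedI i i)
              (Release (mkI (m - i) (Some (n - i))) psi phi)) (range 1 m)))
    (bigAnd (map (fun i => WNext (closedI i i)
              (Release (closedI 0 (n - 1 - i)) psi phi)) (range (m + 1) (n - 1)))))).
Proof.
  intros Hm. rewrite sat_Release_step by exact Hm.
  cbn [sat]. rewrite !sat_bigAnd_map_range. cbv beta.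
  setoid_rewrite sat_WNext. setoid_rewrite in_int_closedI_point.
  set (d := tau M (S k) - tau M k). apply or_iff_compat_l. split.
  - intros HR. split; intros i Hi HSk <-; [|rewrite (closedI_shiftI m) by lia]; exact (HR HSk).
  - intros [HR1 HR2] HSk.
    assert (1 <= d) by (specialize (tau_step_lt k HSk); lia).
    destruct (Nat.le_gt_cases d m); [apply HR1; auto; lia|].
    destruct (Nat.lt_ge_cases d n).
    + rewrite <- (closedI_shiftI m) by lia. apply HR2; auto; lia.
    + intros j _ _ HI. apply in_int_shiftI_lt_hi in HI. lia.
Qed.

Lemma sat_Since_expand psi phi m n k : 0 < m -> lt_len M k ->
  sat M k (Since (mkI m (Some n)) psi phi) <->
  sat M k (And psi (Or
    (bigOr (map (fun i => Prev (closedI i i)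
              (Since (mkI (m - i) (Some (n - i))) psi phi)) (range 1 m)))
    (bigOr (map (fun i => Prev (closedI i i)
              (Since (closedI 0 (n - 1 - i)) psi phi)) (range (m + 1) (n - 1)))))).
Proof.
  intros Hm Hk. rewrite sat_Since_step by assumption.
  cbn [sat]. rewrite !sat_bigOr_map_range. cbv beta.
  setoid_rewrite sat_Prev. setoid_rewrite in_int_closedI_point.
  set (d := tau M k - tau M (k - 1)). apply and_iff_compat_l. split.
  - intros (Hpos & HS).
    assert (1 <= d) by (specialize (tau_pred_lt k Hpos Hk); lia).
    assert (d < n).
    { destruct HS as (j & _ & HI & _). exact (in_int_shiftI_lt_hi _ _ _ _ HI). }
    destruct (Nat.le_gt_cases d m).
    + left. exists d. split; [lia | auto].
    + right. exists d. rewrite (closedI_shiftI m) by lia. split; [lia | auto].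
  - intros [(i & Hi & Hpos & HS & <-) | (i & Hi & Hpos & HS & <-)].
    + auto.
    + rewrite (closedI_shiftI m) in HS by lia. auto.
Qed.

Lemma sat_Trigger_expand psi phi m n k : 0 < m -> lt_len M k ->
  sat M k (Trigger (mkI m (Some n)) psi phi) <->
  sat M k (Or psi (And
    (bigAnd (map (fun i => WPrev (closedI i i)
              (Trigger (mkI (m - i) (Some (n - i))) psi phi)) (range 1 m)))
    (bigAnd (map (fun i => WPrev (closedI i i)
              (Trigger (closedI 0 (n - 1 - i)) psi phi)) (range (m + 1) (n - 1)))))).
Proof.
  intros Hm Hk. rewrite sat_Trigger_step by assumption.
  cbn [sat]. rewrite !sat_bigAnd_map_range. cbv beta.
  setoid_rewrite sat_WPrev. setoid_rewrite in_int_closedI_point.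
  set (d := tau M k - tau M (k - 1)). apply or_iff_compat_l. split.
  - intros HT. split; intros i Hi Hpos <-; [|rewrite (closedI_shiftI m) by lia]; exact (HT Hpos).
  - intros [HT1 HT2] Hpos.
    assert (1 <= d) by (specialize (tau_pred_lt k Hpos Hk); lia).
    destruct (Nat.le_gt_cases d m); [apply HT1; auto; lia|].
    destruct (Nat.lt_ge_cases d n).
    + rewrite <- (closedI_shiftI m) by lia. apply HT2; auto; lia.
    + intros j _ HI. apply in_int_shiftI_lt_hi in HI. lia.
Qed.

End Trace.

Theorem theorem2 (A : Type) (psi phi : formula A) (m n : nat) :
  0 < m -> m < n - 1 ->
  equiv_strict (Until (mkI m (Some n)) psi phi)
    (And psi (Or
       (bigOr (map (fun i => Next (closedI i i)
                 (Until (mkI (m - i) (Some (n - i))) psi phi)) (range 1 m)))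
       (bigOr (map (fun i => Next (closedI i i)
                 (Until (closedI 0 (n - 1 - i)) psi phi)) (range (m + 1) (n - 1)))))) /\
  equiv_strict (Release (mkI m (Some n)) psi phi)
    (Or psi (And
       (bigAnd (map (fun i => WNext (closedI i i)
                 (Release (mkI (m - i) (Some (n - i))) psi phi)) (range 1 m)))
       (bigAnd (map (fun i => WNext (closedI i i)
                 (Release (closedI 0 (n - 1 - i)) psi phi)) (range (m + 1) (n - 1)))))) /\
  equiv_strict (Since (mkI m (Some n)) psi phi)
    (And psi (Or
       (bigOr (map (fun i => Prev (closedI i i)
                 (Since (mkI (m - i) (Some (n - i))) psi phi)) (range 1 m)))
       (bigOr (map (fun i => Prev (closedI i i)
                 (Since (closedI 0 (n - 1 - i)) psi phi)) (range (m + 1) (n - 1)))))) /\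
  equiv_strict (Trigger (mkI m (Some n)) psi phi)
    (Or psi (And
       (bigAnd (map (fun i => WPrev (closedI i i)
                 (Trigger (mkI (m - i) (Some (n - i))) psi phi)) (range 1 m)))
       (bigAnd (map (fun i => WPrev (closedI i i)
                 (Trigger (closedI 0 (n - 1 - i)) psi phi)) (range (m + 1) (n - 1)))))).
Proof.
  intros Hm _.
  split; [|split; [|split]]; intros M (_ & _ & Hle) Hlt k Hk;
    [ apply sat_Until_expand | apply sat_Release_expand
    | apply sat_Since_expand | apply sat_Trigger_expand ]; assumption.
Qed.
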